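(* Let $q\in(0,1]$, $\eta\in(0,1]$, $R_0^*>0$, $m_1>0$. Assume [A12]: (i) for every $T\in\mathbb T$, $\mathbb H_T$ is almost surely thrice differentiable in $\theta$ on $B^*=\{\theta\in\Theta:|\theta-\theta^*|<R_0^*\}$; (ii) $\sup_{T}E[\|a_T\|^{m_1}|\partial_\theta\mathbb H_T(\theta^* )|^{m_1}]<\infty$; (iii) $\sup_{T}E[\|a_T\|^{2m_1}\sup_{\theta\in B^*}|\partial_\theta^2\mathbb H_T(\theta)|^{m_1}]<\infty$; (iv) $\sup_{T}E[\|a_T\|^{2m_1}\sup_{\theta\in B^*}|\partial_\theta^3\mathbb H_T(\theta)|^{m_1}]<\infty$ (suprema over $T\in\mathbb T$). Then for every $m_2>0$ there exist constants $R_0>0$ and $K>0$ such that $$c_T\Bigl(\frac{m_1m_2}{qm_1+m_2},R_0\Bigr)\le K\|a_T\|^{-\frac{\eta(2-q)m_1m_2}{qm_1+m_2}}\bigl(E[\|G_T^{(00)}\|^{m_2}]\bigr)^{\frac{qm_1}{qm_1+m_2}}$$ for every $T\in\mathbb T$ with $\|a_T\|\le1$.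
   Context: Let $\Theta\subset\mathbb R^{\mathsf p}$ be a bounded open set with closure $\overline\Theta$ and $\theta^*\in\Theta$. Let $(\Omega,\mathcal F,P)$ be a probability space, $\mathbb T\subset\mathbb R_{\ge0}$ with $\sup\mathbb T=\infty$. For each $T\in\mathbb T$, $\mathbb H_T:\Omega\times\overline\Theta\to\mathbb R$ is a random field continuous in $\theta$ for every $\omega$; $\partial_\theta^k\mathbb H_T$ denotes its $k$-th derivative tensor. Penalty weights $\xi_T^j>0$ ($j=1,\dots,\mathsf p$) are (possibly random). $\mathcal J^{(0)}=\{j:\theta^*_j=0\}$, $\mathcal J^{(1)}=\{j:\theta^*_j\ne0\}$; $A^{(00)}=(A_{ij})_{i,j\in\mathcal J^{(0)}}$. $a_T=\mathrm{diag}(\alpha_T^1,\dots,\alpha_T^{\mathsf p})$ is deterministic, invertible, with $\|a_T\|\to0$ ($\|\cdot\|$ spectral norm); $\mathbb U_T=\{u:\theta^*+a_Tu\in\overline\Theta\}$. $\tilde a_T$ is diagonal with $(\tilde a_T)_{jj}=(\xi_T^j)^{-1/q}$ for $j\in\mathcal J^{(0)}$ and $\alpha_T^j$ for $j\in\mathcal J^{(1)}$; $G_T=a_T^{-1}\tilde a_T$. For $R>0$, $\mathsf c_{T,R}=\sup\frac{|\mathbb H_T(\theta^*+a_Tu)-\mathbb H_T(\theta^*+a_Tv)|}{|u-v|^q}$ over $u,v\in\mathbb U_T$, $u\ne v$, $|a_Tu|,|a_Tv|<R\|a_T\|^{1-\eta}$; for $m>0$, $c_T(m,R)=E[|\mathsf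 c_{T,R}|^{m}\|G_T^{(00)}\|^{qm}]$ (possibly $\infty$). *)

From HB Require Import structures.
From mathcomp Require Import all_boot all_order all_algebra.
From mathcomp Require Import all_classical all_reals all_analysis.
From mathcomp Require Import lebesgue_measure measurable_realfun.
Set Implicit Arguments. Unset Strict Implicit. Unset Printing Implicit Defensive.
Import Order.TTheory GRing.Theory Num.Theory.
Import numFieldNormedType.Exports.
Local Open Scope classical_set_scope.
Local Open Scope ring_scope.

Definition enorm {R : realType} {n : nat} (x : 'rV[R]_n) : R :=
  Num.sqrt (\sum_(i < n) x 0 i ^+ 2).

Definition opnorm {R : realType} {n : nat} (A : 'M[R]_n) : R :=
  sup [set enorm (x *m A) | x in [set x : 'rV[R]_n | enorm x <= 1]].

Definition pderiv {R : realType} {p : nat} (f : 'rV[R]_p -> R) (i : 'I_p)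
  : 'rV[R]_p -> R := fun x => derive f x (delta_mx 0 i).

Definition thrice_diff_on {R : realType} {p : nat} (B : set 'rV[R]_p)
  (f : 'rV[R]_p -> R) : Prop :=
  forall x, B x ->
    [/\ differentiable f x,
        forall i, differentiable (pderiv f i) x &
        forall i j, differentiable (pderiv (pderiv f i) j) x].

Definition dnorm1 {R : realType} {p : nat} (f : 'rV[R]_p -> R) x : R :=
  Num.sqrt (\sum_(i < p) (pderiv f i x) ^+ 2).
Definition dnorm2 {R : realType} {p : nat} (f : 'rV[R]_p -> R) x : R :=
  Num.sqrt (\sum_(i < p) \sum_(j < p) (pderiv (pderiv f i) j x) ^+ 2).
Definition dnorm3 {R : realType} {p : nat} (f : 'rV[R]_p -> R) x : R :=
  Num.sqrt (\sum_(i < p) \sum_(j < p) \sum_(k < p)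
              (pderiv (pderiv (pderiv f i) j) k x) ^+ 2).

Definition J0 {R : realType} {p : nat} (ts : 'rV[R]_p) : {set 'I_p} :=
  [set j | ts 0 j == 0].

Definition atilde {R : realType} {p : nat} (ts : 'rV[R]_p) (q : R)
  (xi alpha : 'I_p -> R) : 'M[R]_p :=
  diag_mx (\row_j (if ts 0 j == 0 then powR (xi j) (- q^-1) else alpha j)).

Definition Gmat {R : realType} {p : nat} (ts : 'rV[R]_p) (q : R)
  (xi alpha : 'I_p -> R) : 'M[R]_p :=
  invmx (diag_mx (\row_j alpha j)) *m atilde ts q xi alpha.

Definition G00 {R : realType} {p : nat} (ts : 'rV[R]_p) (q : R)
  (xi alpha : 'I_p -> R) : 'M[R]_(#|J0 ts|) :=
  mxsub (@enum_val _ (mem (J0 ts))) (@enum_val _ (mem (J0 ts)))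
        (Gmat ts q xi alpha).

(* c_{T,R} for a single realization h = H_T(omega, .) *)
Definition cTR {R : realType} {p : nat} (Theta : set 'rV[R]_p)
  (ts : 'rV[R]_p) (alpha : 'I_p -> R) (q eta Rr : R) (h : 'rV[R]_p -> R)
  : \bar R :=
  let a := diag_mx (\row_j alpha j) in
  let inU u := closure Theta (ts + u *m a) /\
               enorm (u *m a) < Rr * powR (opnorm a) (1 - eta) in
  ereal_sup [set c | exists u v : 'rV[R]_p,
     [/\ u != v, inU u, inU v &
       c = ((`|h (ts + u *m a) - h (ts + v *m a)|
              / powR (enorm (u - v)) q)%:E)]].

Definition cT {R : realType} {d : measure_display} {Omega : measurableType d}
  (P : probability Omega R) {p : nat} (Theta : set 'rV[R]_p)
  (ts : 'rV[R]_p) (alpha : 'I_p -> R) (xi : Omega -> 'I_p -> R)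
  (H : Omega -> 'rV[R]_p -> R) (q eta m Rr : R) : \bar R :=
  (\int[P]_w (poweR `|cTR Theta ts alpha q eta Rr (H w)|%E m
                * (powR (opnorm (G00 ts q (xi w) alpha)) (q * m))%:E))%E.

From HB Require Import structures.
From mathcomp Require Import all_boot all_order all_algebra.
From mathcomp Require Import all_classical all_reals all_analysis.
From mathcomp Require Import lebesgue_measure measurable_realfun.
From mathcomp Require Import ring lra.
Import Order.TTheory GRing.Theory Num.Theory.
Import numFieldNormedType.Exports.
Local Open Scope classical_set_scope.
Local Open Scope ring_scope.

Set Implicit Arguments. Unset Strict Implicit. Unset Printing Implicit Defensive.

(* Fix T and a realization w for which H_T is thrice differentiable on B* and
   S := sup_{B*} |d^2 H_T| is finite (almost every w, by [A12](i),(iii)).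
   Every point ts + a_T u of the localisation set lies in the sup-norm ball
   of radius r = R0 ||a_T||^(1-eta) around ts, so two applications of the
   mean value theorem give
     |H_T(ts + a_T u) - H_T(ts + a_T v)| <= p (|dH_T(ts)| + p r S) |a_T (u - v)|.
   Writing |a_T (u - v)| = |a_T (u - v)|^(1-q) |a_T (u - v)|^q and using
   |a_T (u - v)| <= 2 p r and |a_T (u - v)| <= ||a_T|| |u - v| yields
     c_{T,R0} <= 4 p^3 ||a_T||^(-eta (2-q)) (X1 + X2)^(1/m1),
   where X1 = ||a_T||^m1 |dH_T(ts)|^m1 and X2 = ||a_T||^(2 m1) S^m1 have
   expectations bounded by [A12](ii),(iii). Hoelder's inequality with the
   conjugate exponents m1/m and m2/(q m), m = m1 m2/(q m1 + m2), separates this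
   factor from ||G^(00)_T||^(q m). *)

Section RowVectorNorms.
Variables (R : realType) (n : nat).
Implicit Types x d : 'rV[R]_n.

Lemma normr_rVE x : `|x| = \big[Num.max/0]_ij `|x ij.1 ij.2|.
Proof. exact: mx_normrE. Qed.

Lemma normr_le_sqrt_sumsqr (I : finType) (F : I -> R) i :
  `|F i| <= Num.sqrt (\sum_j F j ^+ 2).
Proof.
rewrite -sqrtr_sqr ler_sqrt ?sumr_ge0// => [|j _]; last exact: sqr_ge0.
by rewrite (bigD1 i)//= lerDl sumr_ge0// => j _; exact: sqr_ge0.
Qed.

Lemma enorm_ge0 x : 0 <= enorm x.
Proof. exact: sqrtr_ge0. Qed.

Lemma enorm_coord x i : `|x 0 i| <= enorm x.
Proof. exact: (normr_le_sqrt_sumsqr (fun j => x 0 j)). Qed.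

Lemma enorm0 : enorm (0 : 'rV[R]_n) = 0.
Proof. by rewrite /enorm big1 ?sqrtr0// => i _; rewrite mxE expr0n. Qed.

Lemma enorm_gt0 x : x != 0 -> 0 < enorm x.
Proof.
move=> x0; have [i xi0] : exists i, x 0 i != 0.
  apply/existsP; apply: contraNT x0 => /existsPn x0.
  by apply/eqP/rowP => i; rewrite mxE; apply/eqP/negPn.
by apply: lt_le_trans (enorm_coord x i); rewrite normr_gt0.
Qed.

Lemma enormZ (c : R) x : enorm (c *: x) = `|c| * enorm x.
Proof.
rewrite /enorm -sqrtr_sqr -sqrtrM ?sqr_ge0 // mulr_sumr.
by congr Num.sqrt; apply: eq_bigr => i _; rewrite mxE exprMn.
Qed.

Lemma enorm_delta j : enorm (delta_mx 0 j : 'rV[R]_n) = 1.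
Proof.
rewrite /enorm (bigD1 j)//= big1 => [|i ij]; last by rewrite mxE (negbTE ij) expr0n.
by rewrite mxE !eqxx expr1n addr0 sqrtr1.
Qed.

Lemma coord_le_mx_norm x i : `|x 0 i| <= `|x|.
Proof. by rewrite normr_rVE (le_bigmax _ _ (0, i)). Qed.

Lemma mx_norm_le_enorm x : `|x| <= enorm x.
Proof.
rewrite normr_rVE; apply: bigmax_le => [|[i j] _]; first exact: enorm_ge0.
by rewrite ord1; exact: enorm_coord.
Qed.

Lemma enorm_le_mx_norm x : enorm x <= n%:R * `|x|.
Proof.
rewrite /enorm -(ger0_norm (mulr_ge0 (ler0n _ n) (normr_ge0 x))) -sqrtr_sqr.
rewrite ler_sqrt ?sqr_ge0 //.
apply: (@le_trans _ _ (\sum_(i < n) `|x| ^+ 2)).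
  apply: ler_sum => i _; rewrite -real_normK ?num_real //.
  by rewrite lerXn2r ?nnegrE ?coord_le_mx_norm.
rewrite sumr_const card_ord -[_ *+ n]mulr_natl exprMn.
apply: ler_wpM2r; first exact: sqr_ge0.
by case: n => [|k]; rewrite ?expr0n // expr2 ler_peMl // ler1n.
Qed.

Lemma enorm_mul_diag_le x d : enorm (x *m diag_mx d) <= `|d| * enorm x.
Proof.
rewrite /enorm -(ger0_norm (normr_ge0 d)) -sqrtr_sqr -sqrtrM ?sqr_ge0 //.
rewrite ler_sqrt ?mulr_ge0 ?sqr_ge0 ?sumr_ge0 // => [|j _]; last exact: sqr_ge0.
rewrite mulr_sumr; apply: ler_sum => j _.
rewrite mul_mx_diag !mxE exprMn mulrC ler_wpM2r ?sqr_ge0 //.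
by rewrite -real_normK ?num_real // lerXn2r ?nnegrE ?normr_id ?coord_le_mx_norm.
Qed.

Lemma opnorm_diag d : opnorm (diag_mx d) = `|d|.
Proof.
set S := [set enorm (x *m diag_mx d) | x in [set x | enorm x <= 1]].
have S_ub : ubound S `|d|.
  move=> _ [x /= x1 <-]; apply: (le_trans (enorm_mul_diag_le x d)).
  by rewrite ler_piMr.
have S0 : S (enorm (0 *m diag_mx d)) by exists 0; rewrite //= enorm0 ler01.
have S_sup (s : R) : S s -> s <= sup S.
  by apply: sup_upper_bound; split; [exists (enorm (0 *m diag_mx d))|exists `|d|].
rewrite /opnorm -/S; apply/eqP; rewrite eq_le; apply/andP; split.
  by apply: ge_sup S_ub; exists (enorm (0 *m diag_mx d)).
rewrite normr_rVE; apply: bigmax_le => [|[i j] _].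
  by apply: le_trans (S_sup _ S0); exact: enorm_ge0.
apply: S_sup; exists (delta_mx 0 j); first by rewrite /= enorm_delta.
rewrite /enorm (bigD1 j)//= big1 ?addr0 => [|k kj]; last first.
  by rewrite mul_mx_diag !mxE (negbTE kj) mul0r expr0n.
by rewrite mul_mx_diag !mxE !eqxx mul1r sqrtr_sqr ord1.
Qed.

End RowVectorNorms.

Section PartialDerivatives.
Variables (R : realType) (p : nat).
Implicit Types (f : 'rV[R]_p -> R) (x y z v : 'rV[R]_p).

Lemma derive_sum_pderiv f z v : differentiable f z ->
  'D_v f z = \sum_i v 0 i * pderiv f i z.
Proof.
move=> df; rewrite deriveE // {1}(row_sum_delta v) linear_sum.
by apply: eq_bigr => i _; rewrite linearZ /= /pderiv deriveE.
Qed.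

Lemma MVT_rV f x y :
  (forall t, 0 <= t <= 1 -> differentiable f (x + t *: (y - x))) ->
  exists2 t, 0 <= t <= 1 &
    f y - f x = \sum_i (y - x) 0 i * pderiv f i (x + t *: (y - x)).
Proof.
move=> df; set g := fun t : R => f (x + t *: (y - x)).
have g_shift t : (fun h : R => h^-1 *: (g (h *: 1 + t) - g t)) =
    (fun h => h^-1 *:
      (f (h *: (y - x) + (x + t *: (y - x))) - f (x + t *: (y - x)))).
  apply/funext => h; rewrite /g; congr (_ *: (f _ - _)).
  by rewrite -[h *: 1]/(h * 1) mulr1 scalerDl addrCA.
have g_derive t : 0 <= t <= 1 ->
    derivable g t 1 /\ 'D_1 g t = 'D_(y - x) f (x + t *: (y - x)).
  move=> t01; rewrite /derivable /derive g_shift; split => //.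
  exact: diff_derivable (df _ t01).
have [t t01 MVTg] : exists2 t : R, t \in `[0, 1] &
    g 1 - g 0 = 'D_(y - x) f (x + t *: (y - x)) * (1 - 0).
  apply: MVT_segment => //.
  - move=> t; rewrite in_itv /= => /andP[t0 t1].
    have t01 : 0 <= t <= 1 by apply/andP; split; apply: ltW.
    by have [g_der <-] := g_derive t t01; exact: DeriveDef.
  - apply: continuous_in_subspaceT => t; rewrite inE /= in_itv /= => t01.
    by apply/differentiable_continuous/derivable1_diffP; case: (g_derive t t01).
move: t01; rewrite in_itv /= => t01.
exists t => //; move: MVTg.
rewrite /g scale1r scale0r addr0 (addrC x) subrK subr0 mulr1 => ->.
exact: derive_sum_pderiv (df _ t01).
Qed.

Lemma pderiv_le_dnorm1 f x i : `|pderiv f i x| <= dnorm1 f x.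
Proof. exact: (normr_le_sqrt_sumsqr (fun i => pderiv f i x)). Qed.

Lemma pderiv2_le_dnorm2 f x i j : `|pderiv (pderiv f i) j x| <= dnorm2 f x.
Proof.
rewrite /dnorm2 pair_bigA /=.
exact: (normr_le_sqrt_sumsqr
  (fun ij : 'I_p * 'I_p => pderiv (pderiv f ij.1) ij.2 x) (i, j)).
Qed.

Lemma norm_sum_mul_le (c e : 'I_p -> R) M K :
  (forall i, `|c i| <= M) -> (forall i, `|e i| <= K) ->
  `|\sum_i c i * e i| <= p%:R * M * K.
Proof.
move=> cM eK; apply: (le_trans (ler_norm_sum _ _ _)).
apply: (@le_trans _ _ (\sum_(i < p) M * K)).
  by apply: ler_sum => i _; rewrite normrM ler_pM.
by rewrite sumr_const card_ord -mulrA mulr_natl.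
Qed.

End PartialDerivatives.

Lemma ball_segment (R : realType) (V : normedModType R) (c x y : V) (r t : R) :
  ball c r x -> ball c r y -> 0 <= t <= 1 -> ball c r (x + t *: (y - x)).
Proof.
rewrite -!ball_normE /ball_ /= => cx cy /andP[t0 t1].
have -> : c - (x + t *: (y - x)) = (1 - t) *: (c - x) + t *: (c - y).
  rewrite !scalerBr !scalerBl !scale1r opprD !opprB !addrA; congr (_ - _).
  by rewrite [RHS](addrAC _ (- x)) (addrAC (c - t *: c)) subrK [LHS]addrAC.
apply: (le_lt_trans (ler_normD _ _)); rewrite !normrZ ger0_norm ?subr_ge0 //.
rewrite ger0_norm //.
have [->|tlt1] := eqVneq t 1; first by rewrite subrr mul0r add0r mul1r.
have t1' : 0 < 1 - t by rewrite subr_gt0 lt_neqAle tlt1.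
have -> : r = (1 - t) * r + t * r by ring.
by apply: ltr_leD; [rewrite ltr_pM2l|rewrite ler_wpM2l // ltW].
Qed.

Section LipschitzOnBall.
Variables (R : realType) (p : nat) (h : 'rV[R]_p -> R) (B : set 'rV[R]_p).
Variables (c : 'rV[R]_p) (r S2 : R).
Hypotheses (ball_sub : ball c r `<=` B) (h_diff : thrice_diff_on B h)
  (S2_ub : forall z, B z -> dnorm2 h z <= S2).

Let ball_segment_diff x y : ball c r x -> ball c r y ->
  forall t, 0 <= t <= 1 -> B (x + t *: (y - x)).
Proof. by move=> cx cy t t01; apply: ball_sub; exact: ball_segment. Qed.

Lemma pderiv_le_on_ball z i : ball c r z ->
  `|pderiv h i z| <= dnorm1 h c + p%:R * r * S2.
Proof.
move=> cz; have cc : ball c r c.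
  by apply: ballxx; move: cz; rewrite -ball_normE; exact: le_lt_trans.
have [t t01 MVTi] := MVT_rV (fun t t01 =>
  let: And3 _ d1 _ := h_diff (ball_segment_diff cc cz t01) in d1 i).
rewrite -(subrK (pderiv h i c) (pderiv h i z)) MVTi.
apply: (le_trans (ler_normD _ _)); rewrite addrC lerD ?pderiv_le_dnorm1 //.
apply: norm_sum_mul_le => j; last first.
  exact: le_trans (pderiv2_le_dnorm2 _ _ _ _) (S2_ub (ball_segment_diff cc cz t01)).
apply: ltW; apply: le_lt_trans (coord_le_mx_norm _ _) _.
by rewrite distrC; move: cz; rewrite -ball_normE.
Qed.

Lemma lipschitz_on_ball x y : ball c r x -> ball c r y ->
  `|h x - h y| <= p%:R * (dnorm1 h c + p%:R * r * S2) * enorm (x - y).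
Proof.
move=> cx cy; have [t t01 ->] := MVT_rV (fun t t01 =>
  let: And3 d0 _ _ := h_diff (ball_segment_diff cy cx t01) in d0).
rewrite mulrAC.
apply: norm_sum_mul_le => i; first exact: enorm_coord.
by apply: pderiv_le_on_ball; exact: ball_segment.
Qed.

End LipschitzOnBall.

Section PowerInequalities.
Variable R : realType.
Implicit Types (A a b d e k r s m q eta : R).

Lemma powRD_gt0 A a b : 0 < A -> A `^ (a + b) = A `^ a * A `^ b.
Proof. by move=> A0; rewrite powRD // (gt_eqF A0) implybT. Qed.

Lemma addr_le_powR_sum a b m : 0 <= a -> 0 <= b -> 0 < m ->
  a + b <= 2 * (a `^ m + b `^ m) `^ m^-1.
Proof.
move=> a0 b0 m0.
have le_root c : 0 <= c -> c `^ m <= a `^ m + b `^ m -> c <= (a `^ m + b `^ m) `^ m^-1.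
  move=> c0 cm; rewrite -[c in c <= _](powRr1 c0) -(mulfV (lt0r_neq0 m0)) powRrM.
  by rewrite ge0_ler_powR ?nnegrE ?invr_ge0 ?(ltW m0) ?addr_ge0 ?powR_ge0.
have : a <= (a `^ m + b `^ m) `^ m^-1 by apply: le_root; rewrite ?lerDl ?powR_ge0.
have : b <= (a `^ m + b `^ m) `^ m^-1 by apply: le_root; rewrite ?lerDr ?powR_ge0.
lra.
Qed.

Lemma holder_quotient_le q A d e k : 0 < q <= 1 -> 0 < d -> 0 <= e ->
  e <= A * d -> e <= k -> e / d `^ q <= k `^ (1 - q) * A `^ q.
Proof.
move=> /andP[q0 q1] d0 e0 eAd ek.
have A0 : 0 <= A by rewrite -(pmulr_lge0 _ d0) (le_trans e0).
rewrite ler_pdivrMr ?powR_gt0 // -mulrA -powRM ?(ltW d0) //.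
have [->|e_neq0] := eqVneq e 0; first by rewrite mulr_ge0 ?powR_ge0.
rewrite -{1}(powRr1 e0) -{1}(subrK q 1) powRD ?e_neq0 ?implybT //.
by apply: ler_pM; rewrite ?powR_ge0 // ge0_ler_powR ?nnegrE ?subr_ge0 ?mulr_ge0 ?(ltW d0)
  ?(le_trans e0 ek) // ltW.
Qed.

Lemma powR_scale_le k r s e : 1 <= k -> 0 <= r <= s -> 0 <= e <= 1 ->
  (k * r) `^ e <= k * s `^ e.
Proof.
move=> k1 /andP[r0 rs] /andP[e0 e1].
rewrite powRM ?(le_trans ler01 k1) // ler_pM ?powR_ge0 ?ler1_powR //.
by rewrite ge0_ler_powR ?nnegrE ?(le_trans r0 rs).
Qed.

Lemma lipschitz_scaling_le A eta q D1 S2 : 0 < A <= 1 -> 0 <= eta ->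
  0 <= D1 -> 0 <= S2 ->
  (D1 + A `^ (1 - eta) * S2) * A `^ (1 - eta) `^ (1 - q) * A `^ q <=
  A `^ (- (eta * (2 - q))) * (A * D1 + A ^+ 2 * S2).
Proof.
move=> /andP[A0 A1] eta0 D10 S20.
have e1 : A `^ (1 - eta) `^ (1 - q) * A `^ q = A `^ (1 - eta * (1 - q)).
  by rewrite -powRrM -powRD_gt0 //; congr (_ `^ _); ring.
have e2 : A `^ (1 - eta) * A `^ (1 - eta * (1 - q)) = A `^ 2 * A `^ (- (eta * (2 - q))).
  by rewrite -!powRD_gt0 //; congr (_ `^ _); ring.
have e3 : A * A `^ (- (eta * (2 - q))) = A `^ (1 - eta * (2 - q)).
  by rewrite powRD_gt0 // powRr1 // ltW.
rewrite -mulrA e1 mulrDl -mulrA (mulrCA _ S2) e2.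
set E := - (eta * (2 - q)) in e2 e3 *.
have -> : A `^ E * (A * D1 + A ^+ 2 * S2) = D1 * (A * A `^ E) + S2 * (A `^ 2 * A `^ E).
  by rewrite -(powR_mulrn 2 (ltW A0)); ring.
rewrite e3.
rewrite lerD2r ler_wpM2l // ger_powR ?A0 //.
by rewrite lerD2l lerN2 -subr_ge0 (_ : _ - _ = eta) //; ring.
Qed.

End PowerInequalities.

Section HolderConstant.
Variables (R : realType) (p : nat) (Theta : set 'rV[R]_p) (ts : 'rV[R]_p).
Variables (alpha : 'I_p -> R) (q eta R0 : R) (h : 'rV[R]_p -> R).
Let a := diag_mx (\row_j alpha j).
Let A := opnorm a.
Let r := R0 * A `^ (1 - eta).
Hypotheses (A_gt0 : 0 < A) (R0_gt0 : 0 < R0) (ball_Theta : ball ts r `<=` Theta).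

Let r_gt0 : 0 < r. Proof. by rewrite mulr_gt0 ?powR_gt0. Qed.

Lemma ball_shift_of_enorm_lt u : enorm (u *m a) < r -> ball ts r (ts + u *m a).
Proof.
rewrite -ball_normE /ball_ /= opprD addrA subrr add0r normrN.
exact: le_lt_trans (mx_norm_le_enorm _).
Qed.

Lemma cTR_ge0 (j : 'I_p) : (0 <= cTR Theta ts alpha q eta R0 h)%E.
Proof.
have c_gt0 : 0 < r / (2 * A) by rewrite divr_gt0 // mulr_gt0.
set v : 'rV[R]_p := (r / (2 * A)) *: delta_mx 0 j.
have v_neq0 : 0 != v.
  apply/eqP => /rowP /(_ j); rewrite !mxE !eqxx mulr1 => /esym/eqP.
  by rewrite gt_eqF.
have v_small : enorm (v *m a) < r.
  apply: le_lt_trans (enorm_mul_diag_le _ _) _.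
  rewrite -opnorm_diag -/a -/A enormZ enorm_delta mulr1 gtr0_norm //.
  have -> : A * (r / (2 * A)) = r / 2 by field; exact: lt0r_neq0.
  by rewrite ltr_pdivrMr // ltr_pMr // ltr1n.
apply: le_trans (ereal_sup_ubound _); last first.
  exists 0, v; split => //.
  - split; last by rewrite mul0mx enorm0.
    by apply/subset_closure/ball_Theta; rewrite mul0mx addr0; exact: ballxx.
  - by split => //; apply/subset_closure/ball_Theta; exact: ball_shift_of_enorm_lt.
by rewrite lee_fin divr_ge0 // powR_ge0.
Qed.

Lemma cTR_le_lipschitz (L : R) : 0 < q <= 1 -> 0 <= L ->
  (forall x y, ball ts r x -> ball ts r y -> `|h x - h y| <= L * enorm (x - y)) ->
  (cTR Theta ts alpha q eta R0 h <= (L * ((2 * p%:R * r) `^ (1 - q) * A `^ q))%:E)%E.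
Proof.
move=> q01 L0 h_lip; apply: ge_ereal_sup => _ [u [v [uv [_ hu] [_ hv] ->]]].
rewrite lee_fin.
have bu := ball_shift_of_enorm_lt hu; have bv := ball_shift_of_enorm_lt hv.
have uv_pos : 0 < enorm (u - v) by rewrite enorm_gt0 // subr_eq0.
have dq_ge0 : 0 <= (enorm (u - v) `^ q)^-1 by rewrite invr_ge0 powR_ge0.
apply: le_trans (ler_wpM2r dq_ge0 (h_lip _ _ bu bv)) _.
rewrite -[leLHS]mulrA; apply: ler_wpM2l => //.
apply: holder_quotient_le => //; first exact: enorm_ge0.
  rewrite opprD addrACA subrr add0r -mulmxBl /A opnorm_diag.
  exact: enorm_mul_diag_le.
apply: le_trans (enorm_le_mx_norm _) _; rewrite -mulrA mulrCA; apply: ler_wpM2l => //.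
set x := ts + u *m a in bu *; set y := ts + v *m a in bv *.
have -> : x - y = (x - ts) + (ts - y) by rewrite addrA subrK.
have -> : 2 * r = r + r by ring.
apply: le_trans (ler_normD _ _) _; apply: lerD; apply: ltW.
  by rewrite distrC; move: bu; rewrite -ball_normE.
by move: bv; rewrite -ball_normE.
Qed.

Lemma cTR_le_derivatives (B : set 'rV[R]_p) (S2 : R) : (0 < p)%N ->
  A <= 1 -> R0 <= 1 -> 0 <= eta <= 1 -> 0 < q <= 1 ->
  ball ts R0 `<=` B -> thrice_diff_on B h -> (forall z, B z -> dnorm2 h z <= S2) ->
  (cTR Theta ts alpha q eta R0 h <=
   (2 * p%:R ^+ 3 * A `^ (- (eta * (2 - q))) * (A * dnorm1 h ts + A ^+ 2 * S2))%:E)%E.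
Proof.
move=> p_gt0 A_le1 R0_le1 /andP[eta0 eta1] q01 ball_B h_diff S2_ub.
set D1 := dnorm1 h ts; set s := A `^ (1 - eta).
have s_le1 : s <= 1 by rewrite -(powRr0 A) ger_powR ?A_gt0 // subr_ge0.
have r_le_s : r <= s by rewrite /r -/s ler_piMl ?powR_ge0.
have r_le_R0 : r <= R0 by rewrite /r -/s ler_piMr // ltW.
have p_ge1 : 1 <= p%:R :> R by rewrite ler1n.
have D1_ge0 : 0 <= D1 by exact: sqrtr_ge0.
have S2_ge0 : 0 <= S2.
  exact: le_trans (sqrtr_ge0 _) (S2_ub _ (ball_B _ (ballxx _ R0_gt0))).
have L_ge0 : 0 <= p%:R * (D1 + p%:R * r * S2).
  by rewrite mulr_ge0 ?addr_ge0 ?mulr_ge0 ?powR_ge0 // ltW.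
apply: le_trans (cTR_le_lipschitz q01 L_ge0 _) _.
  exact: lipschitz_on_ball (subset_trans (le_ball r_le_R0) ball_B) h_diff S2_ub.
rewrite lee_fin.
have rad : (2 * p%:R * r) `^ (1 - q) <= 2 * p%:R * s `^ (1 - q).
  case/andP: q01 => q0 q1; apply: powR_scale_le.
  - lra.
  - by rewrite r_le_s ltW.
  - by rewrite subr_ge0 q1 gerBl ltW.
have lip : D1 + p%:R * r * S2 <= p%:R * (D1 + s * S2).
  rewrite mulrDr lerD ?ler_peMl // -mulrA ler_wpM2l ?(le_trans ler01) //.
  by rewrite ler_wpM2r.
apply: (@le_trans _ _ (2 * p%:R ^+ 3 * ((D1 + s * S2) * s `^ (1 - q) * A `^ q))).
  have -> : 2 * p%:R ^+ 3 * ((D1 + s * S2) * s `^ (1 - q) * A `^ q) =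
      p%:R * (p%:R * (D1 + s * S2)) * ((2 * p%:R * s `^ (1 - q)) * A `^ q) by ring.
  apply: ler_pM => //; first by rewrite mulr_ge0 ?powR_ge0.
    by apply: ler_wpM2l.
  by apply: ler_wpM2r; first exact: powR_ge0.
rewrite -[leRHS]mulrA; apply: ler_wpM2l; first by rewrite mulr_ge0 ?exprn_ge0.
by apply: lipschitz_scaling_le; rewrite ?A_gt0.
Qed.

End HolderConstant.

Section NonmeasurableIntegral.
Local Open Scope ereal_scope.
Variables (R : realType) (d : measure_display) (T : measurableType d).
Variable mu : {measure set T -> \bar R}.

(* The integrand of [cT] is not known to be measurable; monotonicity of the
   integral of nonnegative functions does not need it. *)
Lemma ge0_le_integral_nonmeas (f1 f2 : T -> \bar R) : (forall x, 0 <= f1 x) ->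
  (forall x, f1 x <= f2 x) -> \int[mu]_x f1 x <= \int[mu]_x f2 x.
Proof.
move=> f1_ge0 f12; have f2_ge0 x : 0 <= f2 x := le_trans (f1_ge0 x) (f12 x).
rewrite /integral; apply: leeB.
  apply: ereal_sup_le => _ [g /= g_le <-]; exists g => //= x.
  apply: le_trans (g_le x) _.
  by rewrite !funeposE /patch /= mem_set // ge_max !le_max f12 lexx orbT.
apply: ereal_sup_le => _ [g /= g_le <-]; exists g => //= x.
apply: le_trans (g_le x) _.
rewrite !funenegE /patch /= mem_set // ge_max !le_max lexx !orbT andbT.
by rewrite leeN2 f12.
Qed.

Lemma ae_ge0_le_integral_nonmeas (f1 f2 : T -> \bar R) : (forall x, 0 <= f1 x) ->
  (forall x, 0 <= f2 x) -> measurable_fun setT f2 ->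
  {ae mu, forall x, f1 x <= f2 x} -> \int[mu]_x f1 x <= \int[mu]_x f2 x.
Proof.
move=> f1_ge0 f2_ge0 mf2 [N [mN muN0 f12N]].
pose f3 x := if x \in N then +oo else f2 x.
have mf3 : measurable_fun setT f3.
  apply: measurable_fun_ifT => //; apply: (measurable_fun_bool true).
  by rewrite setTI preimage_mem_true.
apply: (@le_trans _ _ (\int[mu]_x f3 x)).
  apply: ge0_le_integral_nonmeas => // x; rewrite /f3.
  case: ifPn => [_|/negP xN]; first exact: leey.
  by apply: contrapT => f12; apply: xN; apply/mem_set/f12N.
rewrite le_eqVlt; apply/orP; left; apply/eqP.
apply: ae_eq_integral => //; exists N; split => // x /= f32; apply: contrapT => xN.
by apply: f32 => _; rewrite /f3 memNset.
Qed.

Lemma hoelder_powR (F G : T -> R) (a b r1 r2 : R) :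
  measurable_fun setT F -> measurable_fun setT G ->
  (0 < r1)%R -> (0 < r2)%R -> (r1^-1 + r2^-1 = 1)%R ->
  \int[mu]_x (F x `^ a * G x `^ b)%:E <=
  (\int[mu]_x (F x `^ (a * r1))%:E) `^ r1^-1 *
  (\int[mu]_x (G x `^ (b * r2))%:E) `^ r2^-1.
Proof.
move=> mF mG r1_gt0 r2_gt0 r12.
have := hoelder mu (measurableT_comp (measurable_powR a) mF)
  (measurableT_comp (measurable_powR b) mG) r1_gt0 r2_gt0 r12.
rewrite Lnorm1 unlock /=.
under eq_integral do rewrite /= ger0_norm ?mulr_ge0 ?powR_ge0 //.
under [X in _ <= X `^ _ * _]eq_integral do rewrite /= ger0_norm ?powR_ge0 // -powRrM.
by under [X in _ <= _ * X `^ _]eq_integral do rewrite /= ger0_norm ?powR_ge0 // -powRrM.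
Qed.

End NonmeasurableIntegral.

Section PenaltyMatrix.
Variables (R : realType) (p : nat) (ts : 'rV[R]_p) (q : R).

Lemma Gmat_diag (xi alpha : 'I_p -> R) : (forall j, alpha j != 0) ->
  Gmat ts q xi alpha = diag_mx (\row_j ((alpha j)^-1 *
     (if ts 0 j == 0 then xi j `^ (- q^-1) else alpha j))).
Proof.
move=> alpha_neq0; rewrite /Gmat /atilde.
have alpha_inv : diag_mx (\row_j alpha j) *m diag_mx (\row_j (alpha j)^-1) = 1%:M.
  by rewrite mulmx_diag -diag_const_mx; congr diag_mx; apply/rowP => j; rewrite !mxE mulfV.
have [alpha_unit _] := mulmx1_unit alpha_inv.
rewrite -[invmx _]mulmx1 -alpha_inv mulmxA mulVmx // mul1mx mulmx_diag.
by congr diag_mx; apply/rowP => j; rewrite !mxE.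
Qed.

Lemma G00_diag (xi alpha : 'I_p -> R) : (forall j, alpha j != 0) ->
  G00 ts q xi alpha = diag_mx (\row_i
    ((alpha (enum_val i))^-1 * xi (enum_val i) `^ (- q^-1))).
Proof.
move=> alpha_neq0; rewrite /G00 Gmat_diag //; apply/matrixP => i j; rewrite !mxE.
have /[!inE] /eqP -> := enum_valP i; rewrite eqxx.
have [->|ij] := eqVneq i j; first by rewrite !eqxx.
by rewrite (inj_eq enum_val_inj) (negbTE ij).
Qed.

Lemma measurable_opnorm_G00 (d : measure_display) (Omega : measurableType d)
    (xi : Omega -> 'I_p -> R) (alpha : 'I_p -> R) :
  (forall j, alpha j != 0) -> (forall j, measurable_fun setT (fun w => xi w j)) ->
  measurable_fun setT (fun w => opnorm (G00 ts q (xi w) alpha)).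
Proof.
move=> alpha_neq0 mxi.
under eq_fun do rewrite G00_diag // opnorm_diag normr_rVE.
elim: (index_enum _) => [|ij s IHs].
  by under eq_fun do rewrite big_nil; exact: measurable_cst.
under eq_fun do rewrite big_cons mxE.
apply: measurable_maxr IHs; apply: measurableT_comp => //.
apply: measurable_funM; first exact: measurable_cst.
exact: measurableT_comp (measurable_powR _) (mxi _).
Qed.

Lemma opnorm_G00_dim0 (xi alpha : 'I_p -> R) : (forall j, alpha j != 0) ->
  ('I_p -> False) -> opnorm (G00 ts q xi alpha) = 0.
Proof.
move=> alpha_neq0 no_coord; rewrite G00_diag // opnorm_diag.
by apply/eqP; rewrite normr_eq0; apply/eqP/rowP => i; case: (no_coord (enum_val i)).
Qed.

End PenaltyMatrix.

Lemma exists_ball_radius (R : realType) (p : nat) (Theta : set 'rV[R]_p)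
    (ts : 'rV[R]_p) (R0s : R) :
  open Theta -> Theta ts -> 0 < R0s ->
  exists2 R0 : R, 0 < R0 <= 1 &
    ball ts R0 `<=` [set x | Theta x /\ enorm (x - ts) < R0s].
Proof.
move=> Theta_open Theta_ts R0s_gt0.
have /nbhs_ballP[e e_gt0 ball_e] : nbhs ts Theta by exact: open_nbhs_nbhs.
have p1_gt0 : 0 < p.+1%:R :> R by rewrite ltr0n.
set R0 := Num.min 1 (Num.min e (R0s / p.+1%:R)).
have R0_e : R0 <= e by rewrite !ge_min lexx orbT.
have R0_s : R0 <= R0s / p.+1%:R by rewrite !ge_min lexx !orbT.
exists R0; first by rewrite ge_min lexx lt_min ltr01 lt_min e_gt0 divr_gt0.
move=> z z_ball; split; first exact/ball_e/(le_ball R0_e).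
apply: le_lt_trans (enorm_le_mx_norm _) _; rewrite -normrN opprB.
have : `|ts - z| < R0s / p.+1%:R.
  by apply: lt_le_trans R0_s; move: z_ball; rewrite -ball_normE.
rewrite ltr_pdivlMr // => z_lt; apply: le_lt_trans z_lt.
by rewrite mulrC ler_wpM2l // ler_nat.
Qed.

Section Proposition6.
Local Open Scope ereal_scope.
Variables (R : realType) (d : measure_display) (Omega : measurableType d).
Variables (P : probability Omega R) (p : nat) (Theta : set 'rV[R]_p) (ts : 'rV[R]_p).
Variables (h : Omega -> 'rV[R]_p -> R) (xi : Omega -> 'I_p -> R) (alpha : 'I_p -> R).
Variables (q eta R0s m1 R0 M : R).

Let A := opnorm (diag_mx (\row_j alpha j)).
Let Bs := [set x | Theta x /\ (enorm (x - ts) < R0s)%R].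
Let X1 w := (A `^ m1 * dnorm1 (h w) ts `^ m1)%R.
Let U2 w := (A `^ (2 * m1))%:E * ereal_sup [set (dnorm2 (h w) x)%:E | x in Bs] `^ m1.
Let C := (4 * p%:R ^+ 3 * A `^ (- (eta * (2 - q))))%R.
Let Z w := (C * (X1 w + fine (U2 w)) `^ m1^-1)%R.

Hypotheses (p_gt0 : (0 < p)%N) (A_gt0 : (0 < A)%R) (A_le1 : (A <= 1)%R).
Hypotheses (q01 : (0 < q <= 1)%R) (eta01 : (0 < eta <= 1)%R) (m1_gt0 : (0 < m1)%R).
Hypotheses (R0_01 : (0 < R0 <= 1)%R) (ball_Bs : ball ts R0 `<=` Bs).
Hypothesis h_diff : {ae P, forall w, thrice_diff_on Bs (h w)}.
Hypotheses (mX1 : measurable_fun setT (fun w => (X1 w)%:E)) (mU2 : measurable_fun setT U2).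
Hypotheses (int_X1 : \int[P]_w (X1 w)%:E <= M%:E) (int_U2 : \int[P]_w U2 w <= M%:E).

Let U2_ge0 w : 0 <= U2 w.
Proof. by rewrite mule_ge0 ?lee_fin ?powR_ge0 ?poweR_ge0. Qed.

Let C_gt0 : (0 < C)%R.
Proof. by rewrite !mulr_gt0 ?exprn_gt0 ?powR_gt0 ?ltr0n. Qed.

Let mZ : measurable_fun setT Z.
Proof.
apply: measurable_funM; first exact: measurable_cst.
apply: measurableT_comp (measurable_powR _) (measurable_funD _ _).
  exact/measurable_EFinP.
exact: measurableT_comp (fine_measurable measurableT) mU2.
Qed.

Let ball_Theta : ball ts (R0 * A `^ (1 - eta)) `<=` Theta.
Proof.
case/andP: R0_01 => R0_gt0 R0_le1; case/andP: eta01 => _ eta_le1.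
have r_le_R0 : (R0 * A `^ (1 - eta) <= R0)%R.
  by rewrite ler_piMr ?(ltW R0_gt0) // -[leRHS](powRr0 A) ger_powR ?A_gt0 // subr_ge0.
by move=> z /(le_ball r_le_R0)/ball_Bs[].
Qed.

Let sup_dnorm2_fin w : U2 w \is a fin_num ->
  ereal_sup [set (dnorm2 (h w) x)%:E | x in Bs] \is a fin_num.
Proof.
rewrite /U2; set S2e := ereal_sup _ => U2_fin.
have S2e_ge : (dnorm2 (h w) ts)%:E <= S2e.
  by apply: ereal_sup_ubound; exists ts => //; apply/ball_Bs/ballxx; case/andP: R0_01.
rewrite ge0_fin_numE ?(le_trans _ S2e_ge) ?lee_fin ?sqrtr_ge0 //.
rewrite ltey; apply: contraTN U2_fin => /eqP ->.
by rewrite poweRyr ?gt_eqF // gt0_muley ?lte_fin ?powR_gt0.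
Qed.

Lemma cTR_le_Z w : thrice_diff_on Bs (h w) -> U2 w \is a fin_num ->
  `|cTR Theta ts alpha q eta R0 (h w)| <= (Z w)%:E.
Proof.
move=> hw_diff /sup_dnorm2_fin S2e_fin; case/andP: R0_01 => R0_gt0 R0_le1.
set S2e := ereal_sup _ in S2e_fin; pose S2 := fine S2e.
have S2_ub z : Bs z -> (dnorm2 (h w) z <= S2)%R.
  by move=> Bz; rewrite -lee_fin fineK //; apply: ereal_sup_ubound; exists z.
have S2_ge0 : (0 <= S2)%R.
  by apply: le_trans (S2_ub _ (ball_Bs (ballxx _ R0_gt0))); exact: sqrtr_ge0.
have eta01' : (0 <= eta <= 1)%R by case/andP: eta01 => /ltW -> ->.
rewrite gee0_abs ?(cTR_ge0 q (h w) A_gt0 R0_gt0 ball_Theta (Ordinal p_gt0)) //.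
apply: le_trans (cTR_le_derivatives Theta A_gt0 R0_gt0 p_gt0 A_le1 R0_le1 eta01' q01
  ball_Bs hw_diff S2_ub) _.
have X1E : X1 w = ((A * dnorm1 (h w) ts) `^ m1)%R by rewrite /X1 powRM ?sqrtr_ge0 ?ltW.
have U2E : fine (U2 w) = ((A ^+ 2 * S2) `^ m1)%R.
  rewrite /U2 -/S2e -(fineK S2e_fin) poweR_EFin -EFinM /=.
  by rewrite (powRM _ (exprn_ge0 _ (ltW A_gt0)) S2_ge0) -(powR_mulrn 2 (ltW A_gt0)) -powRrM.
have sum_le : (A * dnorm1 (h w) ts + A ^+ 2 * S2 <=
    2 * ((A * dnorm1 (h w) ts) `^ m1 + (A ^+ 2 * S2) `^ m1) `^ m1^-1)%R.
  by apply: addr_le_powR_sum; rewrite ?mulr_ge0 ?sqrtr_ge0 ?exprn_ge0 // ltW.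
rewrite -/A lee_fin /Z /C X1E U2E; apply: le_trans (ler_wpM2l _ sum_le) _.
  by rewrite !mulr_ge0 ?exprn_ge0 ?powR_ge0.
by rewrite mulrA (mulrAC _ _ 2%R) (mulrAC 2%R) -natrM.
Qed.

Lemma cTR_le_ae :
  {ae P, forall w, `|cTR Theta ts alpha q eta R0 (h w)| <= (Z w)%:E}.
Proof.
have U2_int : P.-integrable setT U2.
  apply/integrableP; split => //; under eq_integral do rewrite gee0_abs //.
  exact: le_lt_trans int_U2 (ltry _).
apply: filterS2 (integrable_ae measurableT U2_int) h_diff => w /(_ I) U2_fin hw_diff.
exact: cTR_le_Z.
Qed.

Lemma integral_Z_powR_le : \int[P]_w (Z w `^ m1)%:E <= (C `^ m1 * (M + M))%:E.
Proof.
have X1_ge0 w : (0 <= X1 w)%R by rewrite mulr_ge0 ?powR_ge0.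
have Z_powR w : (Z w `^ m1 = C `^ m1 * (X1 w + fine (U2 w)))%R.
  rewrite /Z (powRM _ (ltW C_gt0) (powR_ge0 _ _)) -powRrM mulVf ?gt_eqF // powRr1 //.
  by rewrite addr_ge0 ?fine_ge0.
have mU2f : measurable_fun setT (fun w => (fine (U2 w))%:E).
  exact/measurable_EFinP/(measurableT_comp (fine_measurable measurableT) mU2).
under eq_integral do rewrite Z_powR EFinM EFinD.
rewrite ge0_integralZl_EFin ?powR_ge0 //; last 2 first.
- by move=> w _; rewrite -EFinD lee_fin addr_ge0 ?fine_ge0.
- exact: emeasurable_funD.
rewrite EFinM lee_pmul2l ?lte_fin ?powR_gt0 //.
rewrite ge0_integralD //; last 2 first.
- by move=> w _; rewrite lee_fin.
- by move=> w _; rewrite lee_fin fine_ge0.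
rewrite EFinD leeD // (le_trans _ int_U2) // ge0_le_integral //.
- by move=> w _; rewrite lee_fin fine_ge0.
- by move=> w _; have := U2_ge0 w; case: (U2 w).
Qed.

Variable m2 : R.
Hypotheses (m2_gt0 : (0 < m2)%R) (alpha_neq0 : forall j, (alpha j != 0)%R).
Hypothesis mxi : forall j, measurable_fun setT (fun w => xi w j).
Let m := (m1 * m2 / (q * m1 + m2))%R.
Let g w := opnorm (G00 ts q (xi w) alpha).

Lemma cT_le : cT P Theta ts alpha xi h q eta m R0 <=
  ((4 * p%:R ^+ 3) `^ m * (M + M) `^ (m / m1) *
     A `^ (- (eta * (2 - q) * m1 * m2 / (q * m1 + m2))))%:E *
  (\int[P]_w (g w `^ m2)%:E) `^ (q * m1 / (q * m1 + m2)).
Proof.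
have q_gt0 : (0 < q)%R by case/andP: q01.
have D_gt0 : (0 < q * m1 + m2)%R by rewrite addr_gt0 ?mulr_gt0.
have m_gt0 : (0 < m)%R by rewrite !divr_gt0 ?mulr_gt0.
have M_ge0 : (0 <= M)%R.
  rewrite -lee_fin (le_trans _ int_X1) // integral_ge0 // => w _.
  by rewrite lee_fin mulr_ge0 ?powR_ge0.
pose r1 := (m1 / m)%R; pose r2 := (m2 / (q * m))%R.
have r1_gt0 : (0 < r1)%R := divr_gt0 m1_gt0 m_gt0.
have r2_gt0 : (0 < r2)%R := divr_gt0 m2_gt0 (mulr_gt0 q_gt0 m_gt0).
have r12 : (r1^-1 + r2^-1 = 1)%R.
  by rewrite !invf_div /m; field; rewrite !gt_eqF ?mulr_gt0.
have mg : measurable_fun setT g := measurable_opnorm_G00 ts q alpha_neq0 mxi.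
apply: le_trans (@ae_ge0_le_integral_nonmeas _ _ _ P _
  (fun w => (Z w `^ m * g w `^ (q * m))%:E) _ _ _ _) _.
- by move=> w; rewrite mule_ge0 ?poweR_ge0 ?lee_fin ?powR_ge0.
- by move=> w; rewrite lee_fin mulr_ge0 ?powR_ge0.
- apply/measurable_EFinP/measurable_funM.
    exact: measurableT_comp (measurable_powR _) mZ.
  exact: measurableT_comp (measurable_powR _) mg.
- apply: filterS cTR_le_ae => w cTR_le; rewrite EFinM lee_wpmul2r ?lee_fin ?powR_ge0 //.
  rewrite -poweR_EFin gt0_ler_poweR ?(ltW m_gt0) // in_itv /= ?abse_ge0 ?leey //.
  by rewrite (le_trans _ cTR_le) ?abse_ge0.
apply: le_trans (hoelder_powR P m (q * m) mZ mg r1_gt0 r2_gt0 r12) _.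
have -> : (m * r1 = m1)%R by rewrite /r1 mulrC divfK // lt0r_neq0.
have -> : (q * m * r2 = m2)%R by rewrite /r2 mulrC divfK // lt0r_neq0 // mulr_gt0.
have -> : (r2^-1 = q * m1 / (q * m1 + m2))%R.
  by rewrite invf_div /m; field; rewrite !gt_eqF ?mulr_gt0.
apply: lee_wpmul2r; first exact: poweR_ge0.
have r1_inv : (r1^-1 = m / m1)%R by rewrite invf_div.
apply: le_trans (gt0_ler_poweR _ _ _ integral_Z_powR_le) _.
- by rewrite invr_ge0 ltW.
- by rewrite in_itv /= leey integral_ge0 // => w _; rewrite lee_fin powR_ge0.
- by rewrite in_itv /= leey lee_fin mulr_ge0 ?powR_ge0 ?addr_ge0.
rewrite poweR_EFin lee_fin r1_inv powRM ?powR_ge0 ?addr_ge0 // -powRrM.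
have p3_ge0 : (0 <= 4 * p%:R ^+ 3 :> R)%R by apply: mulr_ge0 => //; exact: exprn_ge0.
rewrite [(m1 * _)%R]mulrC divfK ?lt0r_neq0 // /C (powRM _ p3_ge0 (powR_ge0 _ _)) -powRrM.
have -> : (- (eta * (2 - q)) * m = - (eta * (2 - q) * m1 * m2 / (q * m1 + m2)))%R.
  by rewrite /m; ring.
by rewrite mulrAC.
Qed.

End Proposition6.

Lemma cT_dim0 (R : realType) (d : measure_display) (Omega : measurableType d)
    (P : probability Omega R) (p : nat) (Theta : set 'rV[R]_p) (ts : 'rV[R]_p)
    (alpha : 'I_p -> R) (xi : Omega -> 'I_p -> R) (H : Omega -> 'rV[R]_p -> R)
    (q eta m R0 : R) :
  ('I_p -> False) -> (forall j, alpha j != 0) -> 0 < q -> 0 < m ->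
  cT P Theta ts alpha xi H q eta m R0 = 0%E.
Proof.
move=> no_coord alpha_neq0 q_gt0 m_gt0; rewrite /cT.
under eq_integral do rewrite opnorm_G00_dim0 // powR0 ?mulf_neq0 ?gt_eqF // mule0.
exact: integral0.
Qed.

Theorem proposition6
  (R : realType) (d : measure_display) (Omega : measurableType d)
  (P : probability Omega R) (p : nat)
  (Theta : set 'rV[R]_p) (ts : 'rV[R]_p) (TT : set R)
  (H : R -> Omega -> 'rV[R]_p -> R) (xi : R -> Omega -> 'I_p -> R)
  (alpha : R -> 'I_p -> R) (q eta R0s m1 : R)
  (* standing assumptions *)
  (hTh_open : open Theta) (hTh_bdd : bounded_set Theta) (hts : Theta ts)
  (hTT0 : forall T, TT T -> 0 <= T)
  (hTTsup : forall M : R, exists T, TT T /\ M < T)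
  (hHmeas : forall T x, TT T -> closure Theta x ->
     measurable_fun setT (fun w => H T w x))
  (hHcont : forall T w, TT T -> {within closure Theta, continuous (H T w)})
  (hxi_pos : forall T w j, TT T -> 0 < xi T w j)
  (hxi_meas : forall T j, TT T -> measurable_fun setT (fun w => xi T w j))
  (halpha : forall T j, TT T -> alpha T j != 0)
  (halpha_lim : forall e : R, 0 < e -> exists T0 : R, forall T, TT T ->
     T0 <= T -> opnorm (diag_mx (\row_j alpha T j)) < e)
  (* parameters *)
  (hq : 0 < q <= 1) (heta : 0 < eta <= 1) (hR0s : 0 < R0s) (hm1 : 0 < m1)
  (* [A12] (i) *)
  (hA12i : forall T, TT T ->
     {ae P, forall w, thrice_diff_on
        [set x | Theta x /\ (enorm (x - ts) < R0s)%R] (H T w)})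
  (* [A12] (ii) *)
  (hA12ii_meas : forall T, TT T -> measurable_fun setT (fun w : Omega => (
     (powR (opnorm (diag_mx (\row_j alpha T j))) m1
      * powR (dnorm1 (H T w) ts) m1)%:E : \bar R)))
  (hA12ii : exists M : R, forall T, TT T ->
     (\int[P]_w ((powR (opnorm (diag_mx (\row_j alpha T j))) m1
                 * powR (dnorm1 (H T w) ts) m1)%:E) <= M%:E)%E)
  (* [A12] (iii) *)
  (hA12iii_meas : forall T, TT T -> measurable_fun setT (fun w : Omega => (
     ((powR (opnorm (diag_mx (\row_j alpha T j))) (2 * m1))%:E
      * poweR (ereal_sup [set (dnorm2 (H T w) x)%:E
                         | x in [set x | Theta x /\ (enorm (x - ts) < R0s)%R]]) m1)%E : \bar R)))
  (hA12iii : exists M : R, forall T, TT T ->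
     (\int[P]_w ((powR (opnorm (diag_mx (\row_j alpha T j))) (2 * m1))%:E
      * poweR (ereal_sup [set (dnorm2 (H T w) x)%:E
                         | x in [set x | Theta x /\ (enorm (x - ts) < R0s)%R]]) m1)
      <= M%:E)%E)
  (* [A12] (iv) *)
  (hA12iv_meas : forall T, TT T -> measurable_fun setT (fun w : Omega => (
     ((powR (opnorm (diag_mx (\row_j alpha T j))) (2 * m1))%:E
      * poweR (ereal_sup [set (dnorm3 (H T w) x)%:E
                         | x in [set x | Theta x /\ (enorm (x - ts) < R0s)%R]]) m1)%E : \bar R)))
  (hA12iv : exists M : R, forall T, TT T ->
     (\int[P]_w ((powR (opnorm (diag_mx (\row_j alpha T j))) (2 * m1))%:E
      * poweR (ereal_sup [set (dnorm3 (H T w) x)%:E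
                         | x in [set x | Theta x /\ (enorm (x - ts) < R0s)%R]]) m1)
      <= M%:E)%E) :
  forall m2 : R, 0 < m2 ->
  exists R0 K : R, 0 < R0 /\ 0 < K /\
  forall T, TT T -> opnorm (diag_mx (\row_j alpha T j)) <= 1 ->
    (cT P Theta ts (alpha T) (xi T) (H T) q eta
        (m1 * m2 / (q * m1 + m2)) R0
     <= (K * powR (opnorm (diag_mx (\row_j alpha T j)))
                  (- (eta * (2 - q) * m1 * m2 / (q * m1 + m2))))%:E
        * poweR (\int[P]_w (powR (opnorm (G00 ts q (xi T w) (alpha T))) m2)%:E)
                (q * m1 / (q * m1 + m2)))%E.
Proof.
move=> m2 m2_gt0; set m := m1 * m2 / (q * m1 + m2).
have q_gt0 : 0 < q by case/andP: hq.
have m_gt0 : 0 < m := divr_gt0 (mulr_gt0 hm1 m2_gt0) (addr_gt0 (mulr_gt0 q_gt0 hm1) m2_gt0).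
have [j0 _|no_coord] := pickP (@predT 'I_p); last first.
  exists 1, 1; do 2!split => //; move=> T hT _.
  have no_j (j : 'I_p) : False by move: (no_coord j).
  rewrite cT_dim0 //.
  by rewrite mule_ge0 ?poweR_ge0 ?lee_fin ?mulr_ge0 ?powR_ge0.
have [r0 r0_01 ball_R0] := exists_ball_radius hTh_open hts hR0s.
have [M1 hM1] := hA12ii; have [M2 hM2] := hA12iii.
pose M := 1 + `|M1| + `|M2|.
have [M_gt0 M1_le M2_le] : [/\ 0 < M, M1 <= M & M2 <= M].
  move: (ler_norm M1) (ler_norm M2) (normr_ge0 M1) (normr_ge0 M2).
  by rewrite /M => *; split; lra.
have p_gt0 : (0 < p)%N := leq_ltn_trans (leq0n _) (ltn_ord j0).
have K_gt0 : 0 < (4 * p%:R ^+ 3) `^ m * (M + M) `^ (m / m1).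
  apply: mulr_gt0; apply: powR_gt0; last exact: addr_gt0.
  by rewrite mulr_gt0 // exprn_gt0 // ltr0n.
exists r0, ((4 * p%:R ^+ 3) `^ m * (M + M) `^ (m / m1)); split; first by case/andP: r0_01.
split => // T hT A_le1.
have A_gt0 : 0 < opnorm (diag_mx (\row_j alpha T j)).
  by rewrite opnorm_diag (lt_le_trans _ (coord_le_mx_norm _ j0)) // mxE normr_gt0 halpha.
apply: (cT_le (R0s := R0s)) => //.
- exact: hA12i.
- exact: hA12ii_meas.
- exact: hA12iii_meas.
- by rewrite (le_trans (hM1 T hT)) ?lee_fin.
- by rewrite (le_trans (hM2 T hT)) ?lee_fin.
- by move=> j; exact: halpha.
- by move=> j; exact: hxi_meas.
Qed.
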